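(* Assume $\mathcal{D}_{\mathcal{X}}$ is absolutely continuous with respect to $\mathcal{Q}$ and $C_{\mathcal{X}}\ge\|d\mathcal{D}_{\mathcal{X}}/d\mathcal{Q}\|_\infty$. Then for every measurable $H:\mathcal{X}\to\mathbb{R}$ and every measurable $h^*:\mathcal{X}\to\{\pm1\}$, $$\Phi'(H,\mathrm{sign}(H))-\Phi'(H,h^* )\ge\mathrm{corr}_{\mathcal{D}}(h^* )-\mathrm{corr}_{\mathcal{D}}(\mathrm{sign}(H)).$$
   Context: $\mathcal{D}$ is a distribution on $\mathcal{X}\times\{\pm1\}$ with feature marginal $\mathcal{D}_{\mathcal{X}}$, and $\mathcal{Q}$ is another distribution on $\mathcal{X}$. $\mathrm{corr}_{\mathcal{D}}(h)=\mathbb{E}_{(x,y)\sim\mathcal{D}}[yh(x)]$. $\mathrm{sign}(z)=1$ if $z\ge0$, else $-1$. $\psi$ is the Huber loss ($\psi(z)=|z|-\tfrac12$ for $|z|>1$, $\tfrac12z^2$ for $|z|\le1$), $\psi'(z)=\mathrm{sign}(z)\min\{1,|z|\}$. For measurable $H:\mathcal{X}\to\mathbb{R}$ and bounded measurable $h$, $\Phi'(H,h)=C_{\mathcal{X}}\,\mathbb{E}_{x\sim\mathcal{Q}}[\psi'(H(x))h(x)]-\mathbb{E}_{(x,y)\sim\mathcal{D}}[yh(x)]$. *)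

From HB Require Import structures.
From mathcomp Require Import all_boot all_order all_algebra.
From mathcomp Require Import all_classical all_reals all_analysis.
From mathcomp Require Import charge ess_sup_inf.
Set Implicit Arguments. Unset Strict Implicit. Unset Printing Implicit Defensive.
Import Order.TTheory GRing.Theory Num.Theory.
Import numFieldNormedType.Exports.
Local Open Scope classical_set_scope.
Local Open Scope ring_scope.

(* Labels {+1,-1} are encoded by bool: true ↦ +1, false ↦ -1. *)
Definition lab {R : realType} (b : bool) : R := if b then 1 else -1.

Definition sgn {R : realType} (z : R) : R := if 0 <= z then 1 else -1.

Definition huber' {R : realType} (z : R) : R := sgn z * Num.min 1 `|z|.

Definition corr {d} {X : measurableType d} {R : realType}
  (D : {measure set (X * bool) -> \bar R}) (h : X -> R) : R :=
  \int[D]_(p in [set: X * bool]) (lab p.2 * h p.1).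

Definition Phi' {d} {X : measurableType d} {R : realType}
  (C : R) (Q : {measure set X -> \bar R})
  (D : {measure set (X * bool) -> \bar R}) (H h : X -> R) : R :=
  C * (\int[Q]_(x in [set: X]) (huber' (H x) * h x))%R - corr D h.

From HB Require Import structures.
From mathcomp Require Import all_boot all_order all_algebra.
From mathcomp Require Import all_classical all_reals all_analysis.
From mathcomp Require Import charge ess_sup_inf measurable_realfun.
From mathcomp Require Import lra.
Set Implicit Arguments. Unset Strict Implicit. Unset Printing Implicit Defensive.
Import Order.TTheory GRing.Theory Num.Theory.
Import numFieldNormedType.Exports.
Local Open Scope classical_set_scope.
Local Open Scope ring_scope.
Local Open Scope charge_scope.

(* The correlation terms corr_D(sign H) and corr_D(h_star) cancel on both sides,
   so the claim is C (E_Q[psi'(H) sign H] - E_Q[psi'(H) h_star]) >= 0.  Pointwise,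
   psi'(z) sign z = |psi'(z)| dominates psi'(z) h for any |h| <= 1; and C >= 0
   because C bounds the essential supremum of the density dD_X/dQ, whose
   Q-integral is D_X(X) = 1 > 0. *)

Section huber'_facts.
Variable R : realType.
Implicit Types z h : R.

Lemma normr_sgn z : `|sgn z| = 1.
Proof. by rewrite /sgn; case: ifP; rewrite ?normrN normr1. Qed.

Lemma huber'_sgn z : huber' z * sgn z = Num.min 1 `|z|.
Proof. by rewrite /huber' /sgn; case: ifP => _; rewrite ?mul1r ?mulr1 // mulN1r mulrN1 opprK. Qed.

Lemma normr_huber' z : `|huber' z| = Num.min 1 `|z|.
Proof. by rewrite /huber' normrM normr_sgn mul1r ger0_norm // le_min ler01 normr_ge0. Qed.

Lemma normr_huber'_le1 z : `|huber' z| <= 1.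
Proof. by rewrite normr_huber' ge_min lexx. Qed.

Lemma huber'M_le_sgn z h : `|h| <= 1 -> huber' z * h <= huber' z * sgn z.
Proof.
move=> h_le1; rewrite huber'_sgn -normr_huber'.
apply: le_trans (real_ler_norm _) _; first exact: num_real.
by rewrite normrM ler_piMr.
Qed.

Lemma measurable_sgn : measurable_fun [set: R] sgn.
Proof.
apply: measurable_fun_ifT => //.
exact: measurable_fun_ler.
Qed.

Lemma measurable_huber' : measurable_fun [set: R] huber'.
Proof.
apply: measurable_funM; first exact: measurable_sgn.
exact: measurable_minr.
Qed.

End huber'_facts.

Lemma integral_le0_ess_sup_le0 {d} {T : measurableType d} {R : realType}
    (mu : {measure set T -> \bar R}) (g : T -> \bar R) :
  measurable_fun [set: T] g -> (ess_sup mu g <= 0)%E ->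
  (\int[mu]_(x in [set: T]) g x <= 0)%E.
Proof.
move=> mg g_le0; have g_ae_le0 := ess_sup_ge mu g.
have pos_le0 : (\int[mu]_(x in [set: T]) g^\+ x <= \int[mu]_(x in [set: T]) cst 0%E x)%E.
  apply: ae_ge0_le_integral => //; first exact: measurable_funepos.
  apply: filterS g_ae_le0 => x gx _ /=.
  by rewrite funeposE ge_max lexx (le_trans gx).
rewrite integral0 in pos_le0; rewrite integralE.
by rewrite -(sube0 0) leeB // integral_ge0 // => x _; exact: funeneg_ge0.
Qed.

Lemma Radon_Nikodym_ess_sup_gt0 {d} {T : measurableType d} {R : realType}
    (nu : {charge set T -> \bar R}) (mu : {sigma_finite_measure set T -> \bar R}) :
  nu `<< mu -> (0 < nu [set: T])%E -> (0 < ess_sup mu ('d nu '/d mu))%E.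
Proof.
move=> numu nu_gt0; rewrite ltNge; apply/negP => ess_le0.
have := integral_le0_ess_sup_le0 (measurable_int _ (Radon_Nikodym_integrable numu)) ess_le0.
by rewrite -Radon_Nikodym_integral // leNgt nu_gt0.
Qed.

Lemma integrable_normr_le1 {d} {T : measurableType d} {R : realType}
    (mu : {finite_measure set T -> \bar R}) (f : T -> R) :
  measurable_fun [set: T] f -> (forall x, `|f x| <= 1) ->
  mu.-integrable [set: T] (EFin \o f).
Proof.
move=> mf f_le1; apply: measurable_bounded_integrable => //; first exact: fin_num_fun_lty.
by exists 1; split => // M M_gt1 x _; exact: le_trans (f_le1 x) (ltW M_gt1).
Qed.

Theorem mainTheorem5 (d : measure_display) (X : measurableType d) (R : realType)
  (D : probability (X * bool)%type R) (DX : probability X R) (Q : probability X R)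
  (C : R) :
  (* DX is the feature marginal of D *)
  (forall A : set X, measurable A -> DX A = D (A `*` [set: bool])) ->
  (* D_X is absolutely continuous w.r.t. Q *)
  DX `<< Q ->
  (* C >= || dD_X/dQ ||_oo *)
  (ess_sup Q ('d (charge_of_finite_measure DX) '/d Q) <= C%:E)%E ->
  forall (H hs : X -> R),
    measurable_fun [set: X] H ->
    measurable_fun [set: X] hs ->
    (forall x, hs x = 1 \/ hs x = -1) ->
    Phi' C Q D H (fun x => sgn (H x)) - Phi' C Q D H hs
      >= corr D hs - corr D (fun x => sgn (H x)).
Proof.
move=> _ DXQ ess_le_C H hs mH mhs hs_pm.
have C_ge0 : 0 <= C.
  rewrite -lee_fin; apply/ltW/(lt_le_trans _ ess_le_C).
  by apply: Radon_Nikodym_ess_sup_gt0 => //=; rewrite probability_setT.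
have mhuberH := measurableT_comp (@measurable_huber' R) mH.
have hs_le1 x : `|hs x| <= 1 by case: (hs_pm x) => ->; rewrite ?normrN normr1.
have int_le : (\int[Q]_(x in [set: X]) (huber' (H x) * hs x))%R
           <= (\int[Q]_(x in [set: X]) (huber' (H x) * sgn (H x)))%R.
  apply: le_Rintegral => //; last by move=> x _; exact: huber'M_le_sgn.
  - apply: integrable_normr_le1; first exact: measurable_funM.
    by move=> x; rewrite normrM mulr_ile1 ?normr_huber'_le1.
  - apply: integrable_normr_le1.
      exact/measurable_funM/(measurableT_comp (@measurable_sgn R)).
    by move=> x; rewrite normrM normr_sgn mulr1 normr_huber'_le1.
move: (ler_wpM2l C_ge0 int_le); rewrite /Phi'; clear; lra.
Qed.
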